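(* Let $S$ be a simple extension of an infinite field $k$ of characteristic different from $2$, and let $c\in S^*$. Then the set $V_c=\{b\in S^*\mid cb^2\text{ is a primitive element of }S/k\}$ is non-empty and open in $S^*$.
   Context: A $k$-algebra $S$ is a simple extension of degree $n$ of the field $k$ if there is $c\in S^*$ (a primitive element) such that $1,c,\dots,c^{n-1}$ is a $k$-basis of $S$. $S$ is identified with $\mathbb{A}^n(k)$ via a $k$-basis and given the Zariski topology; $S^*$ carries the subspace topology. *)

From HB Require Import structures.
From mathcomp Require Import all_boot all_order all_algebra all_field.
From mathcomp Require Import mpoly.
Set Implicit Arguments. Unset Strict Implicit. Unset Printing Implicit Defensive.
Import GRing.Theory.
Local Open Scope ring_scope.

(* A k-algebra S is modelled as a finite-dimensional unital k-algebra
   (falgType k). *)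

Definition primitive (k : fieldType) (S : falgType k) (x : S) : bool :=
  (x \is a GRing.unit) &&
  basis_of fullv [seq x ^+ i | i <- iota 0 (\dim {: S})].

Definition simple_ext (k : fieldType) (S : falgType k) : Prop :=
  exists c : S, primitive c.

(* Coordinates of x in the fixed basis vbasis {:S}: identification S = A^n(k). *)
Definition coords (k : fieldType) (S : falgType k) (x : S) : 'I_(\dim {: S}) -> k :=
  fun i => coord (vbasis fullv) i x.

(* Zariski-open subsets of S = A^n(k): complements of common zero sets of a
   family of polynomials in the coordinates. *)
Definition zariski_open (k : fieldType) (S : falgType k) (U : S -> Prop) : Prop :=
  exists P : {mpoly k[\dim {: S}]} -> Prop,
    forall x : S, U x <-> exists p, P p /\ p.@[coords x] != 0.

Definition open_in_units (k : fieldType) (S : falgType k) (V : S -> Prop) : Prop :=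
  exists U : S -> Prop, zariski_open U /\
    forall x : S, x \is a GRing.unit -> (V x <-> U x).

Definition infinite_field (k : fieldType) : Prop :=
  forall s : seq k, exists x : k, x \notin s.

From HB Require Import structures.
From mathcomp Require Import all_boot all_order all_algebra all_field.
From mathcomp Require Import mpoly ring.
Set Implicit Arguments. Unset Strict Implicit. Unset Printing Implicit Defensive.
Import GRing.Theory passmx.
Local Open Scope ring_scope.

(* Let rmx y be the matrix of right multiplication by y.  The coordinate rows
   of 1, y, ..., y^(n-1) form the Krylov matrix of rmx y, so y is primitive
   iff it is a unit and the determinant of that matrix is nonzero; this
   determinant is a polynomial in the coordinates of y, which gives openness.
   For non-emptiness start from a primitive a: along the line
   t |-> c + t (a - c) the determinant is a nonzero polynomial p of degree < m.
   Since 2 != 0, 1 + X has a square root s modulo X^m, and b(t) = s(t y) with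
   y = c^-1 (a - c) makes c b(t)^2 agree with the line modulo t^m.  Hence the
   determinant along t |-> c b(t)^2 is congruent to p modulo t^m, so nonzero,
   and so is det (rmx b(t)), which is 1 at t = 0; as k is infinite, some t
   avoids both zero sets. *)

Definition krylov_mx (R : pzSemiRingType) n (u : 'rV[R]_n) (A : 'M[R]_n) : 'M[R]_n :=
  \matrix_i (u *m A ^+ i).

Lemma map_mxX (R R' : pzSemiRingType) (f : {rmorphism R -> R'}) n (A : 'M[R]_n) i :
  map_mx f (A ^+ i) = map_mx f A ^+ i.
Proof. by elim: i => [|i IHi]; rewrite ?map_mx1 // !exprS map_mxM IHi. Qed.

Lemma det_krylov_mx_map (R R' : comPzRingType) (f : {rmorphism R -> R'}) n
    (u : 'rV[R]_n) (A : 'M[R]_n) :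
  f (\det (krylov_mx u A)) = \det (krylov_mx (map_mx f u) (map_mx f A)).
Proof.
rewrite -det_map_mx; congr (\det _); apply/row_matrixP => i.
by rewrite -map_row !rowK map_mxM map_mxX.
Qed.

Lemma in_qpoly_Xn_eq0 (R : nzRingType) m :
  in_qpoly 'X^(m.+1) ('X^(m.+1) : {poly R}) = 0.
Proof.
apply: val_inj; rewrite /= mk_monic_Xn.
exact: (Pdiv.RingMonic.rmodpp (monicXn R m.+1)).
Qed.

Lemma horner_alg_sum (K : fieldType) (A : algType K) (a : A) (q : {poly K}) :
  horner_alg a q = \sum_(i < size q) q`_i *: a ^+ i.
Proof.
rewrite /horner_alg /horner_morph horner_coef size_map_poly.
by apply: eq_bigr => i _; rewrite coef_map /= mulr_algl.
Qed.

Lemma horner_alg0 (R : nzSemiRingType) (A : semiAlgType R) (q : {poly R}) :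
  horner_alg (0 : A) q = q.[0]%:A.
Proof. by rewrite /horner_alg /horner_morph !horner_coef0 coef_map. Qed.

Lemma horner_mx_polyC (R : comNzRingType) m p v (A : 'M[R]_(m, p)) :
  map_mx (horner_eval v) (map_mx polyC A) = A.
Proof. by apply/matrixP => i j; rewrite !mxE horner_evalE hornerC. Qed.

Section InfiniteField.

Variables (k : fieldType) (k_inf : infinite_field k).

Lemma infinite_field_uniq_seq m : exists s : seq k, uniq s /\ size s = m.
Proof.
elim: m => [|m [s [s_uniq s_size]]]; first by exists [::].
by have [x xNs] := k_inf s; exists (x :: s); rewrite /= xNs s_uniq s_size.
Qed.

Lemma infinite_field_nonroot (p : {poly k}) : p != 0 -> exists v, ~~ root p v.
Proof.
move=> p_neq0; have [s [s_uniq s_size]] := infinite_field_uniq_seq (size p).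
have /allPn[v _ pv_neq0] : ~~ all (root p) s.
  by apply/negP => /(max_poly_roots p_neq0)/(_ s_uniq); rewrite s_size ltnn.
by exists v.
Qed.

Lemma infinite_field_poly_inj (p q : {poly k}) :
  (forall v, p.[v] = q.[v]) -> p = q.
Proof.
move=> pq; apply/eqP; rewrite -subr_eq0; apply/negPn/negP.
by move=> /infinite_field_nonroot[v]; rewrite rootE !hornerE pq subrr eqxx.
Qed.

Lemma infinite_field_poly_mx_inj m p (A B : 'M[{poly k}]_(m, p)) :
  (forall v, map_mx (horner_eval v) A = map_mx (horner_eval v) B) -> A = B.
Proof.
move=> AB; apply/matrixP => i j; apply: infinite_field_poly_inj => v.
by have /matrixP/(_ i j) := AB v; rewrite !mxE.
Qed.

End InfiniteField.

Lemma truncated_sqrt_1X (k : fieldType) : (2%:R : k) != 0 -> forall m,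
  exists s r : {poly k}, s.[0] = 1 /\ s ^+ 2 = 1 + 'X + 'X^(m.+1) * r.
Proof.
move=> two_neq0; elim=> [|m [s [r [s0 sE]]]].
  by exists 1, (-1); rewrite hornerC expr1n expr1 mulrN1 addrK.
pose d := r.[0] / 2%:R.
have /factor_theorem[q qE] : root (r - (2%:R * d) *: s + (d ^+ 2) *: 'X^(m.+1)) 0.
  by rewrite rootE !hornerE s0 /d expr0n /= mulr0 addr0 mulr1 mulrC mulKf // subrr.
exists (s - d *: 'X^(m.+1)), q; split; first by rewrite !hornerE expr0n /= mulr0 subr0.
rewrite subr0 in qE.
have -> : 'X^(m.+2) * q = 'X^(m.+1) * (q * 'X) by rewrite exprSr -mulrA [q * _]mulrC.
clearbody d; rewrite -qE sqrrB sE -!mul_polyC rmorphM rmorphXn /= rmorph_nat; ring.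
Qed.

Section RegularRepresentation.

Variables (k : fieldType) (S : falgType k).
Local Notation n := (\dim {:S}).
Local Notation e := (vbasis {:S}).

Definition rmx (y : S) : 'M[k]_n := mxof e e (amulr y).

Lemma rVofM x y : rVof e (x * y) = rVof e x *m rmx y.
Proof. by rewrite mul_mxof rVofK ?vbasisP // lfunE. Qed.

Lemma rmxM y z : rmx (y * z) = rmx y *m rmx z.
Proof.
rewrite /rmx -mxof_comp ?vbasisP //; congr mxof; apply/lfunP => x.
by rewrite comp_lfunE !lfunE /= mulrA.
Qed.

Lemma rmx1 : rmx 1 = 1%:M.
Proof.
rewrite -(mxof1 (basis_free (vbasisP {:S}))); congr mxof.
by apply/lfunP => x; rewrite !lfunE /= mulr1.
Qed.

Lemma rmxX y i : rmx (y ^+ i) = rmx y ^+ i.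
Proof. by elim: i => [|i IHi]; rewrite ?rmx1 // !exprS rmxM IHi. Qed.

Lemma rmx_inj : injective rmx.
Proof. by move=> y z /(can_inj (mxofK (vbasisP _) (vbasisP _)))/amulr_inj. Qed.

Lemma rmx_is_linear : linear rmx.
Proof. by move=> a y z; rewrite /rmx linearP linearP. Qed.

HB.instance Definition _ := GRing.isSemilinear.Build k S 'M[k]_n _ rmx
  (GRing.semilinear_linear rmx_is_linear).

Lemma unitmx_rmx_unit y : rmx y \in unitmx -> y \is a GRing.unit.
Proof.
move=> Uy; pose x := vecof e (rVof e 1 *m invmx (rmx y)).
have xy1 : x * y = 1.
  apply: (can_inj (rVofK (vbasisP {:S}))).
  by rewrite rVofM vecofK ?vbasisP // mulmxKV.
apply/unitrP; exists x; split => //; apply: rmx_inj.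
by rewrite rmxM rmx1 mulmx1C // -rmxM xy1 rmx1.
Qed.

Definition powers_det (y : S) : k := \det (krylov_mx (rVof e 1) (rmx y)).

Lemma rVofX y i : rVof e (y ^+ i) = rVof e 1 *m rmx y ^+ i.
Proof. by rewrite -rmxX -rVofM mul1r. Qed.

Lemma free_rVof_det (X : n.-tuple S) :
  free X = (\det (\matrix_i rVof e X`_i) != 0).
Proof.
set M := \matrix_i rVof e X`_i.
have combE (u : 'rV_n) : vecof e (u *m M) = \sum_i u 0 i *: X`_i.
  rewrite mulmx_sum_row linear_sum; apply: eq_bigr => i _.
  by rewrite linearZ rowK /= rVofK ?vbasisP.
rewrite -unitfE -unitmxE -row_free_unit -kermx_eq0.
apply/freeP/eqP => [freeX | kerM0 u uX0 i].
  apply/row_matrixP => i; rewrite row0; apply/rowP => j; rewrite [RHS]mxE.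
  apply: (freeX (row i (kermx M) 0)).
  by rewrite -combE -row_mul mulmx_ker row0 linear0.
have uM0 : (\row_i u i) *m M = 0.
  apply: (can_inj (vecofK (vbasisP {:S}))); rewrite combE linear0 -[RHS]uX0.
  by apply: eq_bigr => j _; rewrite mxE.
have /sub_kermxP := uM0; rewrite kerM0 submx0 => /eqP/rowP/(_ i).
by rewrite !mxE.
Qed.

Lemma basis_powersE y :
  basis_of fullv [seq y ^+ i | i <- iota 0 n] = (powers_det y != 0).
Proof.
have -> : [seq y ^+ i | i <- iota 0 n] = [tuple y ^+ i | i < n].
  by rewrite /= -val_enum_ord -map_comp.
rewrite basisEfree subvf size_tuple leqnn !andbT free_rVof_det /powers_det.
congr (\det _ != 0); apply/row_matrixP => i.
by rewrite !rowK -tnth_nth tnth_mktuple rVofX.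
Qed.

Lemma primitiveE y : primitive y = (y \is a GRing.unit) && (powers_det y != 0).
Proof. by rewrite /primitive basis_powersE. Qed.

Section Openness.

Local Notation mxC := (map_mx (@mpolyC n k)).

Definition generic_rmx : 'M[{mpoly k[n]}]_n := \sum_i 'X_i *: mxC (rmx e`_i).

Lemma meval_mxC m p (t : 'I_n -> k) (A : 'M[k]_(m, p)) :
  map_mx (meval t) (mxC A) = A.
Proof. by apply/matrixP => i j; rewrite !mxE mevalC. Qed.

Lemma meval_generic_rmx x : map_mx (meval (coords x)) generic_rmx = rmx x.
Proof.
rewrite map_mx_sum {2}(coord_vbasis (memvf x)) linear_sum.
by apply: eq_bigr => i _; rewrite map_mxZ meval_mxC linearZ /= mevalXU.
Qed.

Lemma powers_det_mulX_mpoly (c : S) m :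
  exists p : {mpoly k[n]}, forall x, p.@[coords x] = powers_det (c * x ^+ m).
Proof.
exists (\det (krylov_mx (mxC (rVof e 1)) (mxC (rmx c) *m generic_rmx ^+ m))) => x.
rewrite det_krylov_mx_map map_mxM map_mxX meval_generic_rmx !meval_mxC.
by rewrite /powers_det rmxM rmxX.
Qed.

Lemma zariski_open_powers_det (c : S) m :
  zariski_open (fun x => powers_det (c * x ^+ m) != 0).
Proof.
have [p Hp] := powers_det_mulX_mpoly c m.
exists (eq p) => x; split => [|[_ [<-]]]; last by rewrite Hp.
by rewrite -Hp; exists p.
Qed.

End Openness.

Definition poly_rmx (q : {poly k}) (y : S) : 'M[{poly k}]_n :=
  \sum_(i < size q) (q`_i *: 'X^i) *: map_mx polyC (rmx y ^+ i).

Lemma horner_poly_rmx v q y :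
  map_mx (horner_eval v) (poly_rmx q y) = rmx (horner_alg (v *: y) q).
Proof.
rewrite map_mx_sum horner_alg_sum linear_sum; apply: eq_bigr => i _.
rewrite map_mxZ horner_mx_polyC exprZn scalerA [RHS]linearZ /= rmxX.
by rewrite horner_evalE hornerZ hornerXn.
Qed.

Definition powers_det_poly (c : S) (A : 'M[{poly k}]_n) : {poly k} :=
  \det (krylov_mx (map_mx polyC (rVof e 1)) (map_mx polyC (rmx c) *m A)).

Lemma horner_powers_det_poly c A v y :
  map_mx (horner_eval v) A = rmx y -> (powers_det_poly c A).[v] = powers_det (c * y).
Proof.
move=> Av; rewrite -horner_evalE det_krylov_mx_map map_mxM Av !horner_mx_polyC.
by rewrite /powers_det rmxM.
Qed.

Lemma powers_det_poly_perturb_neq0 c A Z m :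
  (size (powers_det_poly c A) <= m.+1)%N -> powers_det_poly c A != 0 ->
  powers_det_poly c (A + 'X^(m.+1) *: Z) != 0.
Proof.
move=> size_le pA_neq0; apply: contraNneq pA_neq0 => pAZ0.
have small : (size (powers_det_poly c A) < size (mk_monic ('X^(m.+1) : {poly k})))%N.
  by rewrite mk_monic_Xn size_polyXn.
have pAE : in_qpoly 'X^(m.+1) (powers_det_poly c A) =
          in_qpoly 'X^(m.+1) (powers_det_poly c (A + 'X^(m.+1) *: Z)).
  rewrite !det_krylov_mx_map mulmxDr -scalemxAr map_mxD map_mxZ.
  rewrite -[X in X *: _]/(in_qpoly 'X^(m.+1) ('X^(m.+1) : {poly k})).
  by rewrite in_qpoly_Xn_eq0 scale0r addr0.
by rewrite -(in_qpoly_small small) pAE pAZ0 rmorph0.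
Qed.

Lemma exists_unit_powers_det_mul_sqr (k_inf : infinite_field k)
    (two_neq0 : (2%:R : k) != 0) (c a : S) :
  c \is a GRing.unit -> powers_det a != 0 ->
  exists b : S, (b \is a GRing.unit) && (powers_det (c * b ^+ 2) != 0).
Proof.
move=> c_unit a_det; pose y := c^-1 * (a - c).
pose line := poly_rmx (1 + 'X) y.
have line1 : map_mx (horner_eval 1) line = rmx (c^-1 * a).
  rewrite horner_poly_rmx scale1r rmorphD rmorph1 /= horner_algX.
  by rewrite /y mulrBr mulVr // addrC subrK.
have line_neq0 : powers_det_poly c line != 0.
  apply: contraNneq a_det => line0.
  by rewrite -(mulVKr c_unit a) -(horner_powers_det_poly c line1) line0 horner0.
pose m := (size (powers_det_poly c line)).-1.
have [s [r [s0 sE]]] := truncated_sqrt_1X two_neq0 m.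
pose B := poly_rmx s y.
pose Z := map_mx polyC (rmx (y ^+ m.+1)) *m poly_rmx r y.
have hornerB v : map_mx (horner_eval v) B = rmx (horner_alg (v *: y) s).
  exact: horner_poly_rmx.
have B2E : B ^+ 2 = line + 'X^(m.+1) *: Z.
  apply: (infinite_field_poly_mx_inj k_inf) => v.
  rewrite map_mxD map_mxZ /Z !map_mxM hornerB !horner_poly_rmx horner_mx_polyC.
  rewrite /= horner_evalE hornerXn -!rmxM -linearZ -linearD; congr rmx.
  rewrite -rmorphM -expr2 sE !rmorphD rmorphM rmorphXn /= horner_algX.
  by rewrite exprZn -scalerAl.
have sq_neq0 : powers_det_poly c (B ^+ 2) != 0.
  by rewrite B2E powers_det_poly_perturb_neq0 // ?prednK ?size_poly_gt0.
have B0 : (\det B).[0] = 1.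
  by rewrite -horner_evalE -det_map_mx hornerB scale0r horner_alg0 s0 scale1r rmx1 det1.
have unit_neq0 : \det B != 0.
  by apply: contra_eq_neq B0 => ->; rewrite horner0 eq_sym oner_neq0.
have [v] := infinite_field_nonroot k_inf (mulf_neq0 sq_neq0 unit_neq0).
rewrite rootE hornerM mulf_eq0 negb_or => /andP[sq_v unit_v].
exists (horner_alg (v *: y) s); apply/andP; split.
  by apply: unitmx_rmx_unit; rewrite unitmxE unitfE -hornerB det_map_mx.
by rewrite -(horner_powers_det_poly c (A := B ^+ 2) (v := v)) // map_mxX hornerB rmxX.
Qed.

End RegularRepresentation.

Theorem lemma3p3 (k : fieldType) (S : falgType k)
  (k_inf : infinite_field k) (k_char : 2%N \notin [pchar k])
  (S_simple : simple_ext S) (c : S) (c_unit : c \is a GRing.unit) :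
  let V := fun b : S => (b \is a GRing.unit) && primitive (c * b ^+ 2) in
  (exists b : S, V b) /\ open_in_units (fun b => V b).
Proof.
move=> V.
have VE x : x \is a GRing.unit -> V x = (powers_det (c * x ^+ 2) != 0).
  by move=> x_unit; rewrite /V x_unit primitiveE unitrMl ?unitrX // c_unit.
split.
  have two_neq0 : (2%:R : k) != 0.
    by apply: contra k_char => two0; rewrite inE /= two0.
  have [a] := S_simple; rewrite primitiveE => /andP[_ a_det].
  have [b /andP[b_unit b_det]] := exists_unit_powers_det_mul_sqr k_inf two_neq0 c_unit a_det.
  by exists b; rewrite VE.
exists (fun x => powers_det (c * x ^+ 2) != 0).
by split=> [|x /VE ->]; first exact: zariski_open_powers_det.
Qed.
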